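(* Fix $\mathtt d\ge1$ and $\mathtt L\in\mathbb N$. There are infinitely many $\mathtt L$-generic sets. More precisely, for $R\ge1$ let $B_R$ be the set of all ordered $\mathtt d$-tuples of integers $\mathcal S=(\mathtt m_1<\dots<\mathtt m_{\mathtt d})$ with $\max_i|\mathtt m_i|\le R$, and let $G_R\subseteq B_R$ be the subset of those which are $\mathtt L$-generic. Then $\lim_{R\to\infty}|G_R|/|B_R|=1$.
   Context: For integers $\mathtt m_1<\dots<\mathtt m_{\mathtt d}$ let $\mathcal S_{0n}=\{(\mathtt m_i,n):1\le i\le\mathtt d\}$ for $n\in\mathbb Z$; for $1\le i<j\le\mathtt d$ let $\mathscr C^\pm_{i,j}=\{(m,n)\in\mathbb Z^2:(m-\mathtt m_i)(m-\mathtt m_j)+n^2=0,\ \pm n>0\}$, $\mathscr C_{i,j}=\mathscr C^+_{i,j}\cup\mathscr C^-_{i,j}$, $\mathscr S=\bigcup_{n\ne0}\mathcal S_{0n}$, $\mathscr C=\bigcup_{i<j}\mathscr C_{i,j}$. The tuple is generic if $\mathscr S\cap\mathscr C=\emptyset$ and $\mathscr C_{i,j}\cap\mathscr C_{i',j'}=\emptyset$ for all $\{i,j\}\ne\{i',j'\}$; it is $\mathtt L$-generic if it is generic and $\sum_i\ell_i\mathtt m_i\ne0$ for all $\ell\in\mathbb Z^{\mathtt d}$ with $0<\sum_i|\ell_i|\le\mathtt L$. *)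

From mathcomp Require Import all_boot all_order all_algebra.
From mathcomp Require Import boolp.
Set Implicit Arguments. Unset Strict Implicit. Unset Printing Implicit Defensive.
Import Order.TTheory GRing.Theory Num.Theory.
Local Open Scope ring_scope.

Definition inS0n (d : nat) (m : 'I_d -> int) (n : int) (p : int * int) : Prop :=
  exists i : 'I_d, p = (m i, n).

Definition inS (d : nat) (m : 'I_d -> int) (p : int * int) : Prop :=
  exists n : int, n != 0 /\ inS0n m n p.

Definition inCp (d : nat) (m : 'I_d -> int) (i j : 'I_d) (p : int * int) : Prop :=
  (p.1 - m i) * (p.1 - m j) + p.2 ^+ 2 = 0 /\ 0 < p.2.
Definition inCm (d : nat) (m : 'I_d -> int) (i j : 'I_d) (p : int * int) : Prop :=
  (p.1 - m i) * (p.1 - m j) + p.2 ^+ 2 = 0 /\ 0 < - p.2.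
Definition inCij (d : nat) (m : 'I_d -> int) (i j : 'I_d) (p : int * int) : Prop :=
  inCp m i j p \/ inCm m i j p.

Definition inC (d : nat) (m : 'I_d -> int) (p : int * int) : Prop :=
  exists i j : 'I_d, (i < j)%N /\ inCij m i j p.

Definition generic (d : nat) (m : 'I_d -> int) : Prop :=
  (forall p, ~ (inS m p /\ inC m p)) /\
  (forall (i j i' j' : 'I_d) p, (i < j)%N -> (i' < j')%N ->
     [set i; j] != [set i'; j'] -> ~ (inCij m i j p /\ inCij m i' j' p)).

Definition Lgeneric (d L : nat) (m : 'I_d -> int) : Prop :=
  generic m /\
  (forall l : 'I_d -> int,
     (0 < \sum_(i < d) `|l i|)%N -> (\sum_(i < d) `|l i| <= L)%N ->
     \sum_(i < d) l i * m i != 0).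

(* integer tuples with entries in [-R, R], encoded by k |-> k - R *)
Definition toZ (d R : nat) (f : {ffun 'I_d -> 'I_(2 * R + 1)}) : 'I_d -> int :=
  fun i => (nat_of_ord (f i))%:Z - R%:Z.

Definition increasing (d : nat) (m : 'I_d -> int) : bool :=
  [forall i : 'I_d, forall j : 'I_d, (i < j)%N ==> (m i < m j)].

Definition B_R (d R : nat) : {set {ffun 'I_d -> 'I_(2 * R + 1)}} :=
  [set f | increasing (toZ f)].

Definition G_R (d L R : nat) : {set {ffun 'I_d -> 'I_(2 * R + 1)}} :=
  [set f in B_R d R | `[< Lgeneric L (toZ f) >]].

(* A tuple fails to be L-generic only through one of three events: a point
   (m_k, y), y <> 0, lies on a circle C_ij, i.e. (m_k - m_i) (m_j - m_k) is a
   nonzero square; two circles C_ij, C_i'j' with disjoint index pairs meet off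
   the axis, which again gives such a square and then determines m_j' from
   m_i, m_j, m_i' and the meeting point; or a short relation sum_i l_i m_i = 0
   holds, which determines one coordinate from the others.  For fixed u > 0 the
   v < n with u v a square are s t^2 for the least such s, so there are at most
   sqrt n of them.  Hence each event holds for O(n^(d-1) sqrt n) of the n^d
   tuples (n = 2R + 1), whereas |B_R| >= (n / d)^d. *)

From mathcomp Require Import all_boot all_order all_algebra.
From mathcomp Require Import zify ring lra.
From mathcomp Require Import boolp.
Import Order.TTheory GRing.Theory Num.Theory.
Set Implicit Arguments. Unset Strict Implicit. Unset Printing Implicit Defensive.

Definition is_sq (x : nat) : bool := [exists w : 'I_x.+1, w * w == x].

Lemma is_sqP x : reflect (exists w, w * w = x) (is_sq x).
Proof.
apply: (iffP existsP) => [[w /eqP <-]|[w <-]]; first by exists w.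
have w_lt : w < (w * w).+1 by nia.
by exists (Ordinal w_lt).
Qed.

Lemma gcdn_sqr p q : gcdn (p * p) (q * q) = gcdn p q * gcdn p q.
Proof.
have [g0|g_gt0] := posnP (gcdn p q).
  by move: (dvdn_gcdl p q) (dvdn_gcdr p q); rewrite g0 !dvd0n => /eqP-> /eqP->.
set g := gcdn p q in g_gt0 *.
have [p' Ep] : exists p', p = p' * g by apply/dvdnP; rewrite dvdn_gcdl.
have [q' Eq] : exists q', q = q' * g by apply/dvdnP; rewrite dvdn_gcdr.
have cop' : coprime p' q'.
  by rewrite /coprime -(eqn_pmul2r g_gt0) muln_gcdl -Ep -Eq mul1n.
have -> : p * p = (p' * p') * (g * g) by rewrite Ep; ring.
have -> : q * q = (q' * q') * (g * g) by rewrite Eq; ring.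
have /eqP cop2 : coprime (p' * p') (q' * q') by rewrite coprimeMl !coprimeMr cop'.
by rewrite -muln_gcdl cop2 mul1n.
Qed.

Section SquareMultiples.

Variable u : nat.
Hypothesis u_gt0 : 0 < u.

Lemma is_sq_mul_gcd v1 v2 :
  is_sq (u * v1) -> is_sq (u * v2) -> is_sq (u * gcdn v1 v2).
Proof.
by move=> /is_sqP[p Ep] /is_sqP[q Eq]; apply/is_sqP; exists (gcdn p q);
  rewrite -gcdn_sqr Ep Eq muln_gcdr.
Qed.

Lemma is_sq_mul_least s v :
  0 < s -> is_sq (u * s) -> (forall s', 0 < s' -> is_sq (u * s') -> s <= s') ->
  0 < v -> is_sq (u * v) -> exists t, v = s * (t * t).
Proof.
move=> s_gt0 sq_s s_min v_gt0 sq_v.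
have gcd_s : gcdn s v = s.
  apply/eqP; rewrite eqn_leq dvdn_leq ?dvdn_gcdl //=.
  by rewrite s_min ?gcdn_gt0 ?s_gt0 ?is_sq_mul_gcd.
have [k Ev] : exists k, v = k * s by apply/dvdnP; rewrite -gcd_s dvdn_gcdr.
move: sq_s sq_v => /is_sqP[p Ep] /is_sqP[q Eq].
have pp_gt0 : 0 < p * p by rewrite Ep muln_gt0 u_gt0.
have /dvdnP[t Et] : p %| q.
  by rewrite -(dvdn_pexp2r _ _ (isT : 0 < 2)) -!mulnn Eq Ev mulnCA -Ep dvdn_mull.
have Ek : p * p * k = p * p * (t * t).
  by transitivity (u * v); [rewrite Ep Ev | rewrite -Eq Et]; ring.
exists t; rewrite Ev mulnC; congr (_ * _).
by apply/eqP; rewrite -(eqn_pmul2l pp_gt0) Ek.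
Qed.

Lemma card_sq_mul_le n K c : n <= K * K ->
  #|[set b : 'I_n | (c < b) && is_sq (u * (b - c))]| <= K.
Proof.
move=> nK; case: n nK => [|n] nK; first by rewrite eq_card0 // => -[].
have ex_s : exists s, (0 < s) && is_sq (u * s).
  by exists u; rewrite u_gt0; apply/is_sqP; exists u.
have [s /andP[s_gt0 sq_s] s_min] := ex_minnP ex_s.
pose h (t : 'I_K) : 'I_n.+1 := inord (c + s * (t * t)).
rewrite -[K in _ <= K]card_ord; apply: (leq_trans _ (leq_imset_card h 'I_K)).
apply/subset_leq_card/subsetP => b; rewrite inE => /andP[c_lt_b sq_b].
have s_least s' : 0 < s' -> is_sq (u * s') -> s <= s' by move=> *; apply/s_min/andP.
have b_c_gt0 : 0 < b - c by rewrite subn_gt0.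
have [t Eb] := is_sq_mul_least s_gt0 sq_s s_least b_c_gt0 sq_b.
have t_lt_K : t < K.
  have tt_lt_n : t * t < n.+1.
    apply: leq_ltn_trans (ltn_ord b); apply: leq_trans (leq_subr c b).
    by rewrite Eb leq_pmull.
  rewrite ltnNge; apply: contraTN tt_lt_n => K_le_t.
  by rewrite -leqNgt (leq_trans nK) ?leq_mul.
apply/imsetP; exists (Ordinal t_lt_K) => //=.
by apply: val_inj; rewrite /= inordK -Eb; have := ltn_ord b; lia.
Qed.

End SquareMultiples.

Lemma card_set_pair_sum (X Y : finType) (A : {set X * Y}) :
  #|A| = \sum_(x : X) #|[set y | (x, y) \in A]|.
Proof.
pose F x y := if (x, y) \in A then 1 else 0.
rewrite -sum1_card big_mkcond (eq_bigr (fun p => F p.1 p.2)); last by case.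
rewrite -(pair_big xpredT xpredT F); apply: eq_big => // x _.
by rewrite -sum1_card [RHS]big_mkcond; apply: eq_big => // y _; rewrite inE.
Qed.

Lemma card_exists_le (X W : finType) (P : X -> W -> bool) c :
  (forall w, #|[set x | P x w]| <= c) -> #|[set x | [exists w, P x w]]| <= #|W| * c.
Proof.
move=> P_le; pose A := [set p : W * X | P p.2 p.1].
have -> : [set x | [exists w, P x w]] = snd @: A.
  apply/setP => x; rewrite inE; apply/existsP/imsetP => [[w Pxw]|[[w y] Pyw ->]].
    by exists (w, x); rewrite ?inE.
  by exists w; rewrite inE in Pyw.
rewrite (leq_trans (leq_imset_card _ _)) // card_set_pair_sum -sum_nat_const.
by apply: leq_sum => w _; apply: leq_trans (P_le w); apply/eq_leq/eq_card => x; rewrite !inE.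
Qed.

Lemma leq_card_in_set (X Y : finType) (A : {set X}) (B : {set Y}) (h : X -> Y) :
  {in A &, injective h} -> {in A, forall x, h x \in B} -> #|A| <= #|B|.
Proof.
move=> h_inj hAB; rewrite -(card_in_imset h_inj); apply/subset_leq_card/subsetP.
by move=> _ /imsetP[x xA ->]; exact: hAB.
Qed.

Lemma card_determined_off_le d n (J : {set 'I_d}) (W : finType) (Ws : {set W})
    (S : {set {ffun 'I_d -> 'I_n}}) (g : {ffun 'I_d -> 'I_n} -> W) :
  {in S &, forall f f' : {ffun 'I_d -> 'I_n}, {in ~: J, f =1 f'} -> g f = g f' -> f = f'} ->
  {in S, forall f, g f \in Ws} ->
  #|S| <= n ^ #|~: J| * #|Ws|.
Proof.
move=> g_inj gWs.
pose restr (f : {ffun 'I_d -> 'I_n}) := [ffun x : {x | x \in ~: J} => f (val x)].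
apply: leq_trans (leq_card_in_set (B := setX [set: {ffun _ -> 'I_n}] Ws)
  (h := fun f => (restr f, g f)) _ _) _.
- move=> f f' fS f'S [/ffunP Er Eg]; apply: g_inj => // x xJ.
  by have := Er (exist _ x xJ); rewrite !ffunE.
- by move=> f fS; rewrite in_setX in_setT gWs.
by rewrite cardsX cardsT card_ffun card_ord card_sig.
Qed.

(* [sq_triple a x b] says that the circle with diameter [a, b] on the x-axis
   passes through a lattice point (x, y) with y <> 0. *)
Definition sq_triple (a x b : nat) : bool := (a < x < b) && is_sq ((x - a) * (b - x)).

Definition sq_triples n : {set 'I_n * 'I_n * 'I_n} :=
  [set t : 'I_n * 'I_n * 'I_n | sq_triple t.1.1 t.1.2 t.2].

Lemma card_sq_triples n K : n <= K * K -> #|sq_triples n| <= n * n * K.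
Proof.
move=> nK; rewrite card_set_pair_sum.
have -> : n * n * K = \sum_(ax : 'I_n * 'I_n) K by rewrite sum_nat_const card_prod card_ord.
apply: leq_sum => -[a x] _; have [a_lt_x|] := ltnP a x.
  have u_gt0 : 0 < x - a by rewrite subn_gt0.
  apply: leq_trans (card_sq_mul_le u_gt0 x nK).
  by apply/subset_leq_card/subsetP => b; rewrite !inE /sq_triple /= a_lt_x andTb.
move=> x_le_a; rewrite (_ : [set b | _] = set0) ?cards0 //.
by apply/setP => b; rewrite !inE /sq_triple /= ltnNge x_le_a.
Qed.

Section CircleGeometry.
Local Open Scope ring_scope.

Lemma circle_end_uniq (x c b b' Y : int) : Y != 0 ->
  (x - c) * (x - b) + Y = 0 -> (x - c) * (x - b') + Y = 0 -> b = b'.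
Proof.
move=> Y_neq0 Eb Eb'.
have xc_neq0 : x - c != 0.
  by apply: contra Y_neq0 => /eqP xc0; move: Eb; rewrite xc0 mul0r add0r => ->.
have /eqP : (x - c) * (b' - b) = 0 by rewrite mulrBr; lia.
by rewrite mulf_eq0 (negbTE xc_neq0) subr_eq0 => /eqP.
Qed.

Lemma circle_between (a b x y : int) : a < b -> y != 0 ->
  (x - a) * (x - b) + y ^+ 2 = 0 -> a < x < b.
Proof.
move=> a_lt_b y_neq0 E; have y2_gt0 : 0 < y ^+ 2 by rewrite exprn_even_gt0.
by apply/andP; split; nia.
Qed.

Lemma circle_sq_triple (a x b : nat) (y : int) : (a < b)%N -> y != 0 ->
  (x%:Z - a%:Z) * (x%:Z - b%:Z) + y ^+ 2 = 0 ->
  sq_triple a x b /\ ((x - a) * (b - x))%N%:Z = y ^+ 2.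
Proof.
move=> a_lt_b y_neq0 E.
have y2_gt0 : 0 < y ^+ 2 by rewrite exprn_even_gt0.
have a_lt_x : (a < x)%N by nia.
have x_lt_b : (x < b)%N by nia.
have Ey : ((x - a) * (b - x))%N%:Z = y ^+ 2 by rewrite PoszM -!subzn 1?ltnW //; lia.
split=> //; rewrite /sq_triple a_lt_x x_lt_b; apply/is_sqP; exists `|y|%N; nia.
Qed.

End CircleGeometry.

(* The circles with diameters [a, b] and [a', b'] meet at (x, y), where
   y^2 = (x - a) (b - x) > 0. *)
Definition circles_meet (a b a' b' x : nat) : bool :=
  sq_triple a x b && ((x%:Z - a'%:Z) * (x%:Z - b'%:Z) + ((x - a) * (b - x))%N%:Z == 0)%R.

Lemma circles_meet_uniq a b a' b1 b2 x :
  circles_meet a b a' b1 x -> circles_meet a b a' b2 x -> b1 = b2.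
Proof.
move=> /andP[/andP[/andP[a_lt_x x_lt_b] _] /eqP E1] /andP[_ /eqP E2].
have Y_neq0 : (((x - a) * (b - x))%N%:Z != 0)%R.
  by apply/eqP => -[] /eqP; rewrite muln_eq0 !subn_eq0; lia.
by have [] := circle_end_uniq Y_neq0 E1 E2.
Qed.

Lemma card_setC_uniq d (s : seq 'I_d) : uniq s -> #|~: [set i in s]| + size s = d.
Proof. by move=> s_uniq; rewrite -(card_uniqP s_uniq) -[#|s|]cardsE addnC cardsC card_ord. Qed.

Section Events.

Variables d n : nat.
Implicit Type f : {ffun 'I_d -> 'I_n}.

Definition SC_event f (t : 'I_d * 'I_d * 'I_d) : bool :=
  ((f t.1.1, f t.1.2), f t.2) \in sq_triples n.

(* Circles sharing an endpoint and an off-axis point coincide, so only disjoint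
   index pairs need to be considered. *)
Definition CC_event f (q : 'I_d * 'I_d * ('I_d * 'I_d)) : bool :=
  uniq [:: q.1.1; q.1.2; q.2.1; q.2.2] &&
  [exists x : 'I_n, circles_meet (f q.1.1) (f q.1.2) (f q.2.1) (f q.2.2) x].

Lemma card_SC_event K t : n <= K * K -> #|[set f | SC_event f t]| <= n ^ d.-1 * K.
Proof.
case: t => [[i k] j] nK; set s := [:: i; k; j].
have [s_uniq|s_not_uniq] := boolP (uniq s); last first.
  rewrite (_ : [set f | _] = set0) ?cards0 //; apply/setP => f; rewrite !inE.
  apply: contraNF s_not_uniq => SC_f; apply: (@map_uniq _ _ (fun x => f x)).
  move: SC_f; rewrite /SC_event inE /= => /andP[/andP[fi_lt_fk fk_lt_fj] _].
  by rewrite /= !inE -!val_eqE /=; lia.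
have cardJ := card_setC_uniq s_uniq.
apply: leq_trans (card_determined_off_le (J := [set i in s]) (Ws := sq_triples n)
  (g := fun f => ((f i, f k), f j)) _ _) _.
- move=> f f' _ _ Eoff [Ei Ek Ej]; apply/ffunP => x.
  have [|x_notin_J] := boolP (x \in [set i in s]); last by apply: Eoff; rewrite inE.
  by rewrite inE !inE => /or3P[] /eqP->.
- by move=> f; rewrite inE.
have -> : d.-1 = #|~: [set i in s]|.+2 by move: cardJ => /=; lia.
apply: leq_trans (leq_mul (leqnn _) (card_sq_triples nK)) _.
by rewrite !expnS; apply/eq_leq; ring.
Qed.

Lemma card_CC_event K q : n <= K * K -> #|[set f | CC_event f q]| <= n ^ d.-1 * K.
Proof.
case: q => [[i j] [i' j']] nK; set s := [:: i; j; i'; j'].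
have [s_uniq|s_not_uniq] := boolP (uniq s); last first.
  rewrite (_ : [set f | _] = set0) ?cards0 //; apply/setP => f.
  by rewrite !inE; apply: contraNF s_not_uniq => /andP[].
have cardJ := card_setC_uniq s_uniq.
pose x_of f := odflt (f i) [pick x : 'I_n | circles_meet (f i) (f j) (f i') (f j') x].
have x_ofP f : f \in [set f | CC_event f (i, j, (i', j'))] ->
    circles_meet (f i) (f j) (f i') (f j') (x_of f).
  rewrite inE => /andP[_ /existsP[x Cx]].
  by rewrite /x_of; case: pickP => [//|/(_ x)]; rewrite Cx.
apply: leq_trans (card_determined_off_le (J := [set i in s])
  (Ws := setX [set: 'I_n] (sq_triples n)) (g := fun f => (f i', ((f i, x_of f), f j))) _ _) _.
- move=> f f' fS f'S Eoff [Ei' Ei Ex Ej]; apply/ffunP => y.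
  have [|y_notin_J] := boolP (y \in [set i in s]); last by apply: Eoff; rewrite inE.
  have Ej' : f j' = f' j'.
    have := x_ofP _ f'S; rewrite -Ei -Ej -Ei' -Ex => C'.
    exact/val_inj/(circles_meet_uniq (x_ofP _ fS) C').
  by rewrite inE !inE => /or4P[] /eqP->.
- by move=> f /x_ofP /andP[sq_f _]; rewrite in_setX in_setT inE.
rewrite cardsX cardsT card_ord.
have -> : d.-1 = #|~: [set i in s]|.+3 by move: cardJ => /=; lia.
apply: leq_trans (leq_mul (leqnn _) (leq_mul (leqnn n) (card_sq_triples nK))) _.
by rewrite !expnS; apply/eq_leq; ring.
Qed.

End Events.

Definition rel_event d L R (f : {ffun 'I_d -> 'I_(2 * R + 1)})
    (l : {ffun 'I_d -> 'I_(2 * L + 1)}) : bool :=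
  [exists i, toZ l i != 0%R] && (\sum_(i < d) toZ l i * toZ f i == 0)%R.

Lemma card_rel_event d L R l :
  #|[set f | @rel_event d L R f l]| <= (2 * R + 1) ^ d.-1.
Proof.
have [i0 li0_neq0|l0] := pickP (fun i => toZ l i != 0%R); last first.
  rewrite (_ : [set f | _] = set0) ?cards0 //; apply/setP => f; rewrite !inE.
  by apply: contraTF isT => /andP[/existsP[i]]; rewrite l0.
apply: leq_trans (card_determined_off_le (J := [set i0]) (Ws := [set: unit])
  (g := fun _ => tt) _ _) _; last by rewrite cardsT card_unit muln1 cardsC1 card_ord.
- move=> f f' + + Eoff _; rewrite !inE => /andP[_ /eqP rel_f] /andP[_ /eqP rel_f'].
  apply/ffunP => x; have [->|x_neq_i0] := eqVneq x i0; last by apply: Eoff; rewrite !inE.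
  have : (\sum_(i < d) toZ l i * (toZ f i - toZ f' i) = 0)%R.
    by rewrite (eq_bigr _ (fun i _ => mulrBr _ _ _)) sumrB rel_f rel_f' subr0.
  rewrite (bigD1 i0) //= big1 ?addr0 => [|i i_neq_i0]; last first.
    by rewrite /toZ Eoff ?subrr ?mulr0 // !inE.
  move/eqP; rewrite mulf_eq0 (negbTE li0_neq0) subr_eq0 /toZ => /eqP E.
  by apply: val_inj => /=; lia.
- by move=> f _; rewrite inE.
Qed.

Definition bad_set d L R : {set {ffun 'I_d -> 'I_(2 * R + 1)}} :=
  [set f | [exists t, SC_event f t]] :|: [set f | [exists q, CC_event f q]] :|:
  [set f | [exists l, @rel_event d L R f l]].

Lemma card_bad_set_le d L R K : 2 * R + 1 <= K * K ->
  #|bad_set d L R| <= (d ^ 3 + d ^ 4 + (2 * L + 1) ^ d) * K * (2 * R + 1) ^ d.-1.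
Proof.
move=> nK; have K_gt0 : 0 < K by nia.
rewrite !mulnDl; apply: leq_trans (leq_card_setU _ _).1 _; apply: leq_add.
  apply: leq_trans (leq_card_setU _ _).1 _; apply: leq_add.
    apply: leq_trans (card_exists_le (fun t => card_SC_event (d := d) t nK)) _.
    by rewrite !card_prod card_ord; apply/eq_leq; ring.
  apply: leq_trans (card_exists_le (fun q => card_CC_event (d := d) q nK)) _.
  by rewrite !card_prod card_ord; apply/eq_leq; ring.
apply: leq_trans (card_exists_le (fun l => card_rel_event R l)) _.
by rewrite card_ffun !card_ord mulnAC leq_pmulr.
Qed.

Section Genericity.
Local Open Scope ring_scope.

Lemma increasing_ltE d (m : 'I_d -> int) : increasing m ->
  forall i j, (m i < m j) = (i < j)%N.
Proof.
move=> /forallP m_incr i j; have mono (k l : 'I_d) : (k < l)%N -> m k < m l.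
  by move=> k_lt_l; apply: (implyP (forallP (m_incr k) l)).
case: (ltngtP i j) => [/mono //|/mono mji|/val_inj -> ]; last by rewrite ltxx.
by apply/negbTE; rewrite -leNgt ltW.
Qed.

Lemma increasing_inj d (m : 'I_d -> int) : increasing m -> injective m.
Proof.
move=> m_incr i j Em.
by case: (ltngtP i j) => [|| /val_inj //]; rewrite -(increasing_ltE m_incr) Em ltxx.
Qed.

Lemma inCij_circle d (m : 'I_d -> int) i j p : inCij m i j p ->
  (p.1 - m i) * (p.1 - m j) + p.2 ^+ 2 = 0 /\ p.2 != 0.
Proof.
by case=> -[E p2_gt0]; split=> //; apply: contraTneq p2_gt0 => ->; rewrite ?oppr0 ltxx.
Qed.

Variables (d R : nat) (f : {ffun 'I_d -> 'I_(2 * R + 1)}).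
Local Notation m := (toZ f).

Lemma toZ_ltE i j : (m i < m j) = (f i < f j)%N.
Proof. by rewrite ltrD2r ltz_nat. Qed.

Lemma toZ_sub i j : m i - m j = (f i)%:Z - (f j)%:Z.
Proof. by rewrite /toZ; ring. Qed.

Hypothesis f_incr : increasing m.

Lemma SC_event_of_S_C p : inS m p -> inC m p -> exists t, SC_event f t.
Proof.
move=> [y [y_neq0 [k ->]]] [i [j [i_lt_j /inCij_circle[/= E _]]]].
rewrite !toZ_sub in E.
have fi_lt_fj : (f i < f j)%N by rewrite -toZ_ltE (increasing_ltE f_incr).
by exists (i, k, j); rewrite /SC_event inE; exact: (circle_sq_triple fi_lt_fj y_neq0 E).1.
Qed.

Lemma CC_event_of_C_C (i j i' j' : 'I_d) p : (i < j)%N -> (i' < j')%N ->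
  [set i; j] != [set i'; j'] -> inCij m i j p -> inCij m i' j' p ->
  exists q, CC_event f q.
Proof.
case: p => x y i_lt_j i'_lt_j' neq /inCij_circle[/= E y_neq0] /inCij_circle[/= E' _].
have common c b b' : (x - m c) * (x - m b) + y ^+ 2 = 0 ->
    (x - m c) * (x - m b') + y ^+ 2 = 0 -> b = b'.
  move=> Eb Eb'; apply: (increasing_inj f_incr).
  by apply: circle_end_uniq Eb Eb'; rewrite sqrf_eq0.
have flip a b : (x - m a) * (x - m b) + y ^+ 2 = 0 -> (x - m b) * (x - m a) + y ^+ 2 = 0.
  by rewrite mulrC.
have s_uniq : uniq [:: i; j; i'; j'].
  have i_neq_j : i != j by apply: contraTneq i_lt_j => ->; rewrite ltnn.
  have i'_neq_j' : i' != j' by apply: contraTneq i'_lt_j' => ->; rewrite ltnn.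
  have [ii'|i_neq_i'] := eqVneq i i'.
    by move: neq E'; rewrite -ii' => + /(common _ _ _ E) jj'; rewrite jj' eqxx.
  have [ij'|i_neq_j'] := eqVneq i j'.
    by move: neq E'; rewrite -ij' => + /flip/(common _ _ _ E) ji'; rewrite ji' setUC eqxx.
  have [ji'|j_neq_i'] := eqVneq j i'.
    move: neq E'; rewrite -ji' => + /(common _ _ _ (flip _ _ E)) ij'.
    by rewrite ij' setUC eqxx.
  have [jj'|j_neq_j'] := eqVneq j j'.
    by move: neq E'; rewrite -jj' => + /flip/(common _ _ _ (flip _ _ E)) ii'; rewrite ii' eqxx.
  by rewrite /= !inE !negb_or i_neq_j i_neq_i' i_neq_j' j_neq_i' j_neq_j' i'_neq_j'.
have mi_lt_mj : m i < m j by rewrite (increasing_ltE f_incr).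
have /andP[mi_lt_x x_lt_mj] := circle_between mi_lt_mj y_neq0 E.
have x_lt : (absz (x + R%:Z)%R < 2 * R + 1)%N.
  by move: mi_lt_x x_lt_mj; rewrite /toZ; have := ltn_ord (f j); lia.
pose xo := Ordinal x_lt.
have shift a : x - m a = (xo : nat)%:Z - (f a)%:Z.
  by move: mi_lt_x; rewrite /toZ /=; lia.
rewrite !shift in E E'.
have fi_lt_fj : (f i < f j)%N by rewrite -toZ_ltE.
have [sq Ey] := circle_sq_triple fi_lt_fj y_neq0 E.
exists (i, j, (i', j')); rewrite /CC_event s_uniq; apply/existsP; exists xo.
by rewrite /circles_meet sq Ey E' eqxx.
Qed.

Lemma rel_event_of_short_rel L (l : 'I_d -> int) :
  (0 < \sum_(i < d) `|l i|)%N -> (\sum_(i < d) `|l i| <= L)%N ->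
  \sum_(i < d) l i * m i = 0 -> exists c : {ffun 'I_d -> 'I_(2 * L + 1)}, rel_event f c.
Proof.
move=> l_gt0 l_le_L rel.
have li_le_L i : (`|l i| <= L)%N.
  by apply: leq_trans l_le_L; rewrite (bigD1 i) //= leq_addr.
have li_lt i : (absz (l i + L%:Z)%R < 2 * L + 1)%N by have := li_le_L i; lia.
pose c : {ffun 'I_d -> 'I_(2 * L + 1)} := [ffun i => Ordinal (li_lt i)].
have toZ_c i : toZ c i = l i by rewrite /toZ ffunE /=; have := li_le_L i; lia.
exists c; apply/andP; split; last by apply/eqP; under eq_bigr do rewrite toZ_c.
apply/existsP; have [i li_neq0|l0] := pickP (fun i => l i != 0).
  by exists i; rewrite toZ_c.
by move: l_gt0; rewrite big1 // => i _; move/negbFE/eqP: (l0 i) => ->.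
Qed.

End Genericity.

Lemma nongeneric_sub_bad d L R : B_R d R :\: G_R d L R \subset bad_set d L R.
Proof.
apply/subsetP => f; rewrite !inE => /andP[+ f_incr]; rewrite f_incr /=.
apply: contraR; rewrite !negb_or => /andP[/andP[noSC noCC] norel]; apply/asboolP.
split; first split.
- by move=> p [Sp Cp]; apply/(negP noSC)/existsP; exact: SC_event_of_S_C Sp Cp.
- move=> i j i' j' p i_lt_j i'_lt_j' neq [Cp C'p].
  by apply/(negP noCC)/existsP; exact: CC_event_of_C_C i_lt_j i'_lt_j' neq Cp C'p.
- move=> l l_gt0 l_le_L; apply/negP => /eqP rel.
  by apply/(negP norel)/existsP; exact: rel_event_of_short_rel l_gt0 l_le_L rel.
Qed.

Lemma card_B_R_ge d R : 0 < d -> ((2 * R + 1) %/ d) ^ d <= #|B_R d R|.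
Proof.
move=> d_gt0; set M := (2 * R + 1) %/ d.
have digit_lt a b x : a < b -> x < M -> a * M + x < b * M.
  move=> a_lt_b x_lt_M; apply: (@leq_trans (a.+1 * M)); first by rewrite mulSnr ltn_add2l.
  by rewrite leq_mul2r a_lt_b orbT.
have lt_n (g : {ffun 'I_d -> 'I_M}) (i : 'I_d) : i * M + g i < 2 * R + 1.
  by rewrite (leq_trans (digit_lt _ _ _ (ltn_ord i) (ltn_ord (g i)))) // mulnC leq_divM.
pose h g : {ffun 'I_d -> 'I_(2 * R + 1)} := [ffun i => Ordinal (lt_n g i)].
have -> : M ^ d = #|[set: {ffun 'I_d -> 'I_M}]| by rewrite cardsT card_ffun !card_ord.
apply: (leq_card_in_set (h := h)) => [g g' _ _ /ffunP Eh|g _].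
  apply/ffunP => i; have := Eh i; rewrite !ffunE => -[/eqP].
  by rewrite eqn_add2l => /eqP; apply: val_inj.
rewrite inE; apply/forallP => i; apply/forallP => j; apply/implyP => i_lt_j.
rewrite /toZ !ffunE /= ltrD2r ltz_nat.
by rewrite (leq_trans (digit_lt _ _ _ i_lt_j (ltn_ord (g i)))) // leq_addr.
Qed.

Lemma card_nongeneric_le d L R t : 0 < d -> 0 < t -> t * t <= 2 * R + 1 -> d <= 2 * R + 1 ->
  t * #|B_R d R :\: G_R d L R| <=
    2 * (d ^ 3 + d ^ 4 + (2 * L + 1) ^ d) * (2 * d) ^ d * #|B_R d R|.
Proof.
move=> d_gt0 t_gt0 tt_le_n d_le_n.
have B_ge := card_B_R_ge R d_gt0.
set n := 2 * R + 1 in tt_le_n d_le_n B_ge *; set C := d ^ 3 + d ^ 4 + (2 * L + 1) ^ d.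
have bad_le K : n <= K * K -> #|B_R d R :\: G_R d L R| <= C * K * n ^ d.-1.
  move=> nK; apply: leq_trans (subset_leq_card (nongeneric_sub_bad d L R)) _.
  exact: card_bad_set_le.
have qP : [/\ n %/ t * t <= n, n < (n %/ t).+1 * t & t <= n %/ t].
  by rewrite leq_divM ltn_ceil // leq_divRL.
have MP : 0 < n %/ d /\ n < (n %/ d).+1 * d by rewrite divn_gt0 // ltn_ceil.
move: (n %/ t) (n %/ d) qP MP B_ge => q M [qt_le_n n_lt_qt t_le_q] [M_gt0 n_lt_Md] B_ge.
have nK : n <= q.+1 * q.+1 by nia.
have tK : t * q.+1 <= 2 * n by nia.
have n_le : n <= 2 * d * M by nia.
apply: leq_trans (leq_mul (leqnn t) (bad_le _ nK)) _.
have -> : t * (C * q.+1 * n ^ d.-1) = C * n ^ d.-1 * (t * q.+1) by ring.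
apply: leq_trans (leq_mul (leqnn _) tK) _.
have -> : C * n ^ d.-1 * (2 * n) = 2 * C * n ^ d by rewrite -(prednK d_gt0) expnS; ring.
rewrite -!mulnA !leq_mul2l; apply/orP; right; apply/orP; right.
apply: (@leq_trans ((2 * d * M) ^ d)); first by rewrite leq_exp2r.
by rewrite expnMn leq_mul2l B_ge orbT.
Qed.

Section Ratio.
Local Open Scope ring_scope.

Lemma card_setD_ratio (F : numFieldType) (T : finType) (A B : {set T}) :
  A \subset B -> (0 < #|B|)%N ->
  `|#|A|%:R / #|B|%:R - 1| = #|B :\: A|%:R / #|B|%:R :> F.
Proof.
move=> AB B_gt0; have b_gt0 : 0 < #|B|%:R :> F by rewrite ltr0n.
rewrite cardsD (setIidPr AB) natrB ?subset_leq_card //.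
rewrite -[X in `|_ - X|](divff (lt0r_neq0 b_gt0)) -mulrBl normrM distrC.
by rewrite !ger0_norm ?invr_ge0 ?subr_ge0 ?ler_nat ?subset_leq_card ?(ltW b_gt0).
Qed.

End Ratio.

Lemma G_R_sub_B_R d L R : G_R d L R \subset B_R d R.
Proof. by apply/subsetP => f; rewrite inE => /andP[]. Qed.

Local Open Scope ring_scope.

Theorem lemma2p5 (d L : nat) : (1 <= d)%N ->
  forall eps : rat, 0 < eps ->
  exists N : nat, forall R : nat, (N <= R)%N ->
    `| (#|G_R d L R|)%:R / (#|B_R d R|)%:R - 1 | < eps.
Proof.
move=> d_gt0 eps eps_gt0.
set C := (2 * (d ^ 3 + d ^ 4 + (2 * L + 1) ^ d) * (2 * d) ^ d)%N.
have [t C_lt_t] : exists t, C%:R / eps < t%:R.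
  by exists (Num.bound (C%:R / eps)); rewrite archi_boundP // divr_ge0 // ltW.
have t_gt0 : (0 < t)%N.
  by rewrite -(ltr0n rat) (le_lt_trans _ C_lt_t) // divr_ge0 // ltW.
exists (t * t + d)%N => R R_ge.
have tt_le : (t * t <= 2 * R + 1)%N by lia.
have d_le : (d <= 2 * R + 1)%N by lia.
have B_gt0 : (0 < #|B_R d R|)%N.
  by rewrite (leq_trans _ (card_B_R_ge R d_gt0)) // expn_gt0 divn_gt0 // d_le.
have bad_le : t%:R * #|B_R d R :\: G_R d L R|%:R <= C%:R * #|B_R d R|%:R :> rat.
  by rewrite -!natrM ler_nat; exact: card_nongeneric_le.
rewrite card_setD_ratio ?G_R_sub_B_R // ltr_pdivrMr ?ltr0n //.
rewrite ltr_pdivrMr // in C_lt_t.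
have : 0 < t%:R :> rat by rewrite ltr0n.
have : 0 < #|B_R d R|%:R :> rat by rewrite ltr0n.
nra.
Qed.
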